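(* Let $K$ be a field, $V$ a vector space over $K$, and $f_L,f_R,g_L,g_R:V\to V$ linear maps, each of them nonzero. Let $\delta,\gamma\in K$ with $(\delta,\gamma)\ne(0,0)$. Then every $(\delta,\gamma)$-derivation $D$ of the algebra $A(f_L,f_R,g_L,g_R)$ has the form $$D(e)=\begin{cases}0&\text{if }\delta+\gamma\ne1,\\ \beta e&\text{if }\delta+\gamma=1,\end{cases}\qquad D(a)=\alpha a+v_a+w_a',$$ $$D(v)=\varphi(v)+\psi(v)',\qquad D(v')=\widetilde\varphi(v)+\widetilde\psi(v)'\quad(v\in V),$$ for some $\alpha,\beta\in K$, $v_a,w_a\in V$ and linear maps $\varphi,\widetilde\varphi,\psi,\widetilde\psi:V\to V$, which satisfy $$(\delta f_R+\gamma f_L)(v_a)=0,\qquad (\delta g_R+\gamma g_L)(w_a)=0,$$ and $$\begin{aligned} \widetilde\varphi\circ f_L&=\gamma\, g_L\circ\psi, & \widetilde\psi\circ f_L&=\delta\alpha f_L+\gamma f_L\circ\varphi,\\ \widetilde\varphi\circ f_R&=\delta\, g_R\circ\psi, & \widetilde\psi\circ f_R&=\gamma\alpha f_R+\delta f_R\circ\varphi,\\ \varphi\circ g_L&=\delta\alpha g_L+\gamma g_L\circ\widetilde\psi, & \psi\circ g_L&=\gamma f_L\circ\widetilde\varphi,\\ \varphi\circ g_R&=\gamma\alpha g_R+\delta g_R\circ\widetilde\psi, & \psi\circ g_R&=\delta f_R\circ\widetilde\varphi. \end{aligned}$$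
   Context: For fixed $\delta,\gamma\in K$, a $(\delta,\gamma)$-derivation of an algebra $A$ is a linear map $D:A\to A$ with $D(xy)=\delta D(x)y+\gamma xD(y)$ for all $x,y\in A$. Let $V'$ be a second copy of $V$, identified with $V$ via a linear bijection $v\mapsto v'$. The algebra $A(f_L,f_R,g_L,g_R)$ is the vector space $Ke\oplus Ka\oplus V\oplus V'$ (with $e,a$ two new basis elements) with bilinear multiplication determined by $e^2=e$, $a^2=0$, $av=f_L(v)'$, $va=f_R(v)'$, $av'=g_L(v)$, $v'a=g_R(v)$ for $v\in V$, and all other products among $e$, $a$, elements of $V$ and elements of $V'$ equal to zero. (No associativity of this algebra is assumed in the lemma.) *)

From HB Require Import structures.
From mathcomp Require Import all_boot all_order all_algebra.
Set Implicit Arguments. Unset Strict Implicit. Unset Printing Implicit Defensive.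
Import GRing.Theory.
Local Open Scope ring_scope.

(* The algebra A(fL,fR,gL,gR) = K e (+) K a (+) V (+) V', represented as
   the product K * K * V * V (components: e-coeff, a-coeff, V part, V' part). *)
Definition algA (K : fieldType) (V : lmodType K) := (K^o * K^o * V * V)%type.

(* Bilinear multiplication determined by e^2 = e, a^2 = 0, a v = fL(v)',
   v a = fR(v)', a v' = gL(v), v' a = gR(v), all other basis products 0. *)
Definition mulAlg (K : fieldType) (V : lmodType K) (fL fR gL gR : V -> V)
  (x y : algA V) : algA V :=
  let '(e1, a1, v1, w1) := x in
  let '(e2, a2, v2, w2) := y in
  ((e1 * e2 : K^o), (0 : K^o),
   a1 *: gL w2 + a2 *: gR w1,
   a1 *: fL v2 + a2 *: fR v1).

Definition eA (K : fieldType) (V : lmodType K) : algA V := ((1 : K^o), (0 : K^o), 0, 0).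
Definition aA (K : fieldType) (V : lmodType K) : algA V := ((0 : K^o), (1 : K^o), 0, 0).
Definition inV (K : fieldType) (V : lmodType K) (v : V) : algA V := ((0 : K^o), (0 : K^o), v, 0).
Definition inV' (K : fieldType) (V : lmodType K) (v : V) : algA V := ((0 : K^o), (0 : K^o), 0, v).

Definition is_dg_derivation (K : fieldType) (A : lmodType K)
  (mul : A -> A -> A) (delta gamma : K) (D : A -> A) : Prop :=
  linear D /\ forall x y, D (mul x y) = delta *: mul (D x) y + gamma *: mul x (D y).

From HB Require Import structures.
From mathcomp Require Import all_boot all_order all_algebra.
Import GRing.Theory.
Local Open Scope ring_scope.
Set Implicit Arguments. Unset Strict Implicit. Unset Printing Implicit Defensive.

(* Project the rule D(xy) = delta D(x) y + gamma x D(y) onto the four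
   coordinates of A = Ke + Ka + V + V'.  Since e is an idempotent orthogonal to
   a, V and V', the e-coordinate of D vanishes on them, and D(e) is a multiple
   of e fixed by the factor delta + gamma.  For the a-coordinate c of D(v),
   differentiating the zero products v w' and w' v leaves delta c gL(w) = 0 and
   gamma c gR(w) = 0, so c = 0 as gL, gR are nonzero; likewise for D(v').  Then
   the products a a, a v, v a, a v' and v' a give the remaining identities
   coordinate by coordinate. *)

Section Coordinates.
Variables (K : fieldType) (V : lmodType K).

Definition coord_e (x : algA V) : K^o := x.1.1.1.
Definition coord_a (x : algA V) : K^o := x.1.1.2.
Definition coord_v (x : algA V) : V := x.1.2.
Definition coord_v' (x : algA V) : V := x.2.

HB.instance Definition _ := GRing.isLinear.Build K (algA V) K^o *:%R coord_e
  (fun _ _ _ => erefl).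
HB.instance Definition _ := GRing.isLinear.Build K (algA V) K^o *:%R coord_a
  (fun _ _ _ => erefl).
HB.instance Definition _ := GRing.isLinear.Build K (algA V) V *:%R coord_v
  (fun _ _ _ => erefl).
HB.instance Definition _ := GRing.isLinear.Build K (algA V) V *:%R coord_v'
  (fun _ _ _ => erefl).

Lemma inV_is_linear : linear (@inV K V).
Proof. by move=> k u w; rewrite /inV; congr (_, _, _, _) => /=; rewrite scaler0 addr0. Qed.
HB.instance Definition _ := GRing.isLinear.Build K V (algA V) *:%R (@inV K V)
  inV_is_linear.

Lemma inV'_is_linear : linear (@inV' K V).
Proof. by move=> k u w; rewrite /inV'; congr (_, _, _, _) => /=; rewrite scaler0 addr0. Qed.
HB.instance Definition _ := GRing.isLinear.Build K V (algA V) *:%R (@inV' K V)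
  inV'_is_linear.

Lemma algA_decomp (x : algA V) :
  x = coord_e x *: eA V + coord_a x *: aA V + inV (coord_v x) + inV' (coord_v' x).
Proof.
case: x => [[[e a] v] w]; congr (_, _, _, _) => /=;
  by rewrite !scaler0 ?addr0 ?add0r // [_%:A]mulr1.
Qed.

End Coordinates.

Arguments coord_e {K V} !x /.
Arguments coord_a {K V} !x /.
Arguments coord_v {K V} !x /.
Arguments coord_v' {K V} !x /.

Section MulCoordinates.
Variables (K : fieldType) (V : lmodType K) (fL fR gL gR : V -> V).
Local Notation mul := (mulAlg fL fR gL gR).

Lemma coord_e_mul x y : coord_e (mul x y) = coord_e x * coord_e y.
Proof. by case: x => [[[? ?] ?] ?]; case: y => [[[? ?] ?] ?]. Qed.
Lemma coord_a_mul x y : coord_a (mul x y) = 0.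
Proof. by case: x => [[[? ?] ?] ?]; case: y => [[[? ?] ?] ?]. Qed.
Lemma coord_v_mul x y :
  coord_v (mul x y) = coord_a x *: gL (coord_v' y) + coord_a y *: gR (coord_v' x).
Proof. by case: x => [[[? ?] ?] ?]; case: y => [[[? ?] ?] ?]. Qed.
Lemma coord_v'_mul x y :
  coord_v' (mul x y) = coord_a x *: fL (coord_v y) + coord_a y *: fR (coord_v x).
Proof. by case: x => [[[? ?] ?] ?]; case: y => [[[? ?] ?] ?]. Qed.

End MulCoordinates.

Definition linear_fun (K : fieldType) (U W : lmodType K) (f : U -> W) (hf : linear f) :
  {linear U -> W} := HB.pack f (GRing.isLinear.Build K U W *:%R f hf).

Section Products.
Variables (K : fieldType) (V : lmodType K) (fL fR gL gR : {linear V -> V}).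
Local Notation mul := (mulAlg fL fR gL gR).

Ltac compute_mul := rewrite /mulAlg /=; congr (_, _, _, _);
  rewrite ?raddf0 ?scaler0 ?scale0r ?scale1r ?addr0 ?add0r ?mulr0 ?mul0r ?mulr1.

Lemma mul_eA_l y : coord_e y = 0 -> mul (eA V) y = 0.
Proof. by case: y => [[[e a] v] w]; rewrite /coord_e /= => ->; compute_mul. Qed.
Lemma mul_eA_r y : coord_e y = 0 -> mul y (eA V) = 0.
Proof. by case: y => [[[e a] v] w]; rewrite /coord_e /= => ->; compute_mul. Qed.
Lemma mul_eA_eA : mul (eA V) (eA V) = eA V.
Proof. by compute_mul. Qed.
Lemma mul_aA_aA : mul (aA V) (aA V) = 0.
Proof. by compute_mul. Qed.
Lemma mul_inV_inV' v w : mul (inV v) (inV' w) = 0.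
Proof. by compute_mul. Qed.
Lemma mul_inV'_inV w v : mul (inV' w) (inV v) = 0.
Proof. by compute_mul. Qed.
Lemma mul_aA_inV v : mul (aA V) (inV v) = inV' (fL v).
Proof. by compute_mul. Qed.
Lemma mul_inV_aA v : mul (inV v) (aA V) = inV' (fR v).
Proof. by compute_mul. Qed.
Lemma mul_aA_inV' v : mul (aA V) (inV' v) = inV (gL v).
Proof. by compute_mul. Qed.
Lemma mul_inV'_aA v : mul (inV' v) (aA V) = inV (gR v).
Proof. by compute_mul. Qed.

End Products.

Lemma pair_neq0_mul_eq0 (R : idomainType) (d g c : R) :
  (d, g) != (0, 0) -> d * c = 0 -> g * c = 0 -> c = 0.
Proof.
rewrite xpair_eqE negb_and => /orP[] /negbTE nz dc gc; apply/eqP;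
  [move/eqP: dc | move/eqP: gc]; by rewrite mulf_eq0 nz.
Qed.

Lemma scale_nonzero_map_eq0 (K : fieldType) (U W : lmodType K) (f : U -> W) (k : K) :
  ~ (forall w, f w = 0) -> (forall w, k *: f w = 0) -> k = 0.
Proof.
move=> nzf kf; case: (eqVneq k 0) => // nzk; exfalso; apply: nzf => w.
by apply/eqP; have /eqP := kf w; rewrite scaler_eq0 (negbTE nzk).
Qed.

Section Derivation.
Variables (K : fieldType) (V : lmodType K) (fL fR gL gR : {linear V -> V}).
Variables (delta gamma : K) (D : algA V -> algA V).
Hypothesis Dlin : linear D.
Local Notation mul := (mulAlg fL fR gL gR).
Hypothesis Dmul : forall x y, D (mul x y) = delta *: mul (D x) y + gamma *: mul x (D y).

Let D0 : D 0 = 0 := linear0 (linear_fun Dlin).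

Lemma coord_e_Dmul x y :
  coord_e (D (mul x y)) = delta * (coord_e (D x) * coord_e y) + gamma * (coord_e x * coord_e (D y)).
Proof. by rewrite Dmul linearD !linearZ /= !coord_e_mul. Qed.

Lemma coord_a_Dmul x y : coord_a (D (mul x y)) = 0.
Proof. by rewrite Dmul linearD !linearZ /= !coord_a_mul !scaler0 addr0. Qed.

Lemma coord_v_Dmul x y :
  coord_v (D (mul x y)) =
    delta *: (coord_a (D x) *: gL (coord_v' y) + coord_a y *: gR (coord_v' (D x)))
  + gamma *: (coord_a x *: gL (coord_v' (D y)) + coord_a (D y) *: gR (coord_v' x)).
Proof. by rewrite Dmul linearD !linearZ /= !coord_v_mul. Qed.

Lemma coord_v'_Dmul x y :
  coord_v' (D (mul x y)) =
    delta *: (coord_a (D x) *: fL (coord_v y) + coord_a y *: fR (coord_v (D x)))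
  + gamma *: (coord_a x *: fL (coord_v (D y)) + coord_a (D y) *: fR (coord_v x)).
Proof. by rewrite Dmul linearD !linearZ /= !coord_v'_mul. Qed.

Hypothesis hdg : (delta, gamma) != (0, 0).

Lemma coord_e_D_eq0 y : coord_e y = 0 -> coord_e (D y) = 0.
Proof.
move=> y0; apply: (pair_neq0_mul_eq0 hdg).
  by have := coord_e_Dmul y (eA V); rewrite mul_eA_r // D0 y0 /= mulr1 mul0r mulr0 addr0.
by have := coord_e_Dmul (eA V) y; rewrite mul_eA_l // D0 y0 /= mul1r mulr0 mulr0 add0r.
Qed.

Lemma D_eA : D (eA V) = coord_e (D (eA V)) *: eA V.
Proof.
have ee := mul_eA_eA fL fR gL gR.
have a0 : coord_a (D (eA V)) = 0 by rewrite -ee coord_a_Dmul.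
have v0 : coord_v (D (eA V)) = 0.
  by rewrite -ee coord_v_Dmul a0 /= !(scale0r, addr0, scaler0).
have v'0 : coord_v' (D (eA V)) = 0.
  by rewrite -ee coord_v'_Dmul a0 /= !(scale0r, addr0, scaler0).
by rewrite {1}[D _]algA_decomp a0 v0 v'0 scale0r !raddf0 !addr0.
Qed.

Lemma D_eA_cases :
  D (eA V) = if delta + gamma == 1 then coord_e (D (eA V)) *: eA V else 0.
Proof.
have := coord_e_Dmul (eA V) (eA V).
rewrite mul_eA_eA /= mulr1 mul1r -mulrDl => e_fixed.
case: ifP => [_ | /negbT dg1]; rewrite {1}D_eA //.
suff -> : coord_e (D (eA V)) = 0 by rewrite scale0r.
have : (1 - (delta + gamma)) * coord_e (D (eA V)) == 0.
  by rewrite mulrBl mul1r -e_fixed subrr.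
by rewrite mulf_eq0 subr_eq0 eq_sym (negbTE dg1) => /eqP.
Qed.

Hypotheses (hfL : ~ (forall v, fL v = 0)) (hfR : ~ (forall v, fR v = 0)).
Hypotheses (hgL : ~ (forall v, gL v = 0)) (hgR : ~ (forall v, gR v = 0)).

Lemma coord_a_D_inV v : coord_a (D (inV v)) = 0.
Proof.
apply: (pair_neq0_mul_eq0 hdg).
  apply: (scale_nonzero_map_eq0 hgL) => w.
  have := coord_v_Dmul (inV v) (inV' w); rewrite mul_inV_inV' D0 /=.
  by rewrite !(scale0r, raddf0, scaler0, addr0, add0r) scalerA => <-.
apply: (scale_nonzero_map_eq0 hgR) => w.
have := coord_v_Dmul (inV' w) (inV v); rewrite mul_inV'_inV D0 /=.
by rewrite !(scale0r, raddf0, scaler0, addr0, add0r) scalerA => <-.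
Qed.

Lemma coord_a_D_inV' v : coord_a (D (inV' v)) = 0.
Proof.
apply: (pair_neq0_mul_eq0 hdg).
  apply: (scale_nonzero_map_eq0 hfL) => w.
  have := coord_v'_Dmul (inV' v) (inV w); rewrite mul_inV'_inV D0 /=.
  by rewrite !(scale0r, raddf0, scaler0, addr0, add0r) scalerA => <-.
apply: (scale_nonzero_map_eq0 hfR) => w.
have := coord_v'_Dmul (inV w) (inV' v); rewrite mul_inV_inV' D0 /=.
by rewrite !(scale0r, raddf0, scaler0, addr0, add0r) scalerA => <-.
Qed.

Lemma D_aA :
  D (aA V) = coord_a (D (aA V)) *: aA V + inV (coord_v (D (aA V))) + inV' (coord_v' (D (aA V))).
Proof. by rewrite {1}[D _]algA_decomp coord_e_D_eq0 // scale0r add0r. Qed.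

Lemma D_inV v : D (inV v) = inV (coord_v (D (inV v))) + inV' (coord_v' (D (inV v))).
Proof. by rewrite {1}[D _]algA_decomp coord_e_D_eq0 // coord_a_D_inV !scale0r !add0r. Qed.

Lemma D_inV' v : D (inV' v) = inV (coord_v (D (inV' v))) + inV' (coord_v' (D (inV' v))).
Proof. by rewrite {1}[D _]algA_decomp coord_e_D_eq0 // coord_a_D_inV' !scale0r !add0r. Qed.

Lemma coord_v_D_aA_kernel :
  delta *: fR (coord_v (D (aA V))) + gamma *: fL (coord_v (D (aA V))) = 0.
Proof.
have := coord_v'_Dmul (aA V) (aA V); rewrite mul_aA_aA D0 /=.
by rewrite !(raddf0, scaler0, scale1r, addr0, add0r) => <-.
Qed.

Lemma coord_v'_D_aA_kernel :
  delta *: gR (coord_v' (D (aA V))) + gamma *: gL (coord_v' (D (aA V))) = 0.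
Proof.
have := coord_v_Dmul (aA V) (aA V); rewrite mul_aA_aA D0 /=.
by rewrite !(raddf0, scaler0, scale1r, addr0, add0r) => <-.
Qed.

Let alpha := coord_a (D (aA V)).

Lemma D_inV'_fL v :
  coord_v (D (inV' (fL v))) = gamma *: gL (coord_v' (D (inV v))) /\
  coord_v' (D (inV' (fL v))) = (delta * alpha) *: fL v + gamma *: fL (coord_v (D (inV v))).
Proof.
rewrite -(mul_aA_inV fL fR gL gR) coord_v_Dmul coord_v'_Dmul coord_a_D_inV /=.
by split; rewrite !(raddf0, scaler0, scale0r, scale1r, addr0, add0r) ?scalerA.
Qed.

Lemma D_inV'_fR v :
  coord_v (D (inV' (fR v))) = delta *: gR (coord_v' (D (inV v))) /\
  coord_v' (D (inV' (fR v))) = (gamma * alpha) *: fR v + delta *: fR (coord_v (D (inV v))).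
Proof.
rewrite -(mul_inV_aA fL fR gL gR) coord_v_Dmul coord_v'_Dmul coord_a_D_inV /=.
by split; rewrite !(raddf0, scaler0, scale0r, scale1r, addr0, add0r) ?scalerA // addrC.
Qed.

Lemma D_inV_gL v :
  coord_v (D (inV (gL v))) = (delta * alpha) *: gL v + gamma *: gL (coord_v' (D (inV' v))) /\
  coord_v' (D (inV (gL v))) = gamma *: fL (coord_v (D (inV' v))).
Proof.
rewrite -(mul_aA_inV' fL fR gL gR) coord_v_Dmul coord_v'_Dmul coord_a_D_inV' /=.
by split; rewrite !(raddf0, scaler0, scale0r, scale1r, addr0, add0r) ?scalerA.
Qed.

Lemma D_inV_gR v :
  coord_v (D (inV (gR v))) = (gamma * alpha) *: gR v + delta *: gR (coord_v' (D (inV' v))) /\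
  coord_v' (D (inV (gR v))) = delta *: fR (coord_v (D (inV' v))).
Proof.
rewrite -(mul_inV'_aA fL fR gL gR) coord_v_Dmul coord_v'_Dmul coord_a_D_inV' /=.
by split; rewrite !(raddf0, scaler0, scale0r, scale1r, addr0, add0r) ?scalerA // addrC.
Qed.

End Derivation.

Unset Implicit Arguments. Set Strict Implicit.

Theorem lemma2 (K : fieldType) (V : lmodType K)
  (fL fR gL gR : {linear V -> V})
  (hfL : ~ (forall v, fL v = 0)) (hfR : ~ (forall v, fR v = 0))
  (hgL : ~ (forall v, gL v = 0)) (hgR : ~ (forall v, gR v = 0))
  (delta gamma : K) (hdg : (delta, gamma) != (0, 0))
  (D : algA V -> algA V)
  (hD : is_dg_derivation (mulAlg fL fR gL gR) delta gamma D) :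
  exists (alpha beta : K) (va wa : V) (phi phit psi psit : {linear V -> V}),
    [/\ D (eA V) = (if delta + gamma == 1 then beta *: eA V else 0),
        D (aA V) = alpha *: aA V + inV va + inV' wa,
        (forall v, D (inV v) = inV (phi v) + inV' (psi v)),
        (forall v, D (inV' v) = inV (phit v) + inV' (psit v)) &
        delta *: fR va + gamma *: fL va = 0 /\ delta *: gR wa + gamma *: gL wa = 0] /\
    [/\ forall v, phit (fL v) = gamma *: gL (psi v),
        forall v, psit (fL v) = (delta * alpha) *: fL v + gamma *: fL (phi v),
        forall v, phit (fR v) = delta *: gR (psi v) &
        forall v, psit (fR v) = (gamma * alpha) *: fR v + delta *: fR (phi v)] /\
    [/\ forall v, phi (gL v) = (delta * alpha) *: gL v + gamma *: gL (psit v),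
        forall v, psi (gL v) = gamma *: fL (phit v),
        forall v, phi (gR v) = (gamma * alpha) *: gR v + delta *: gR (psit v) &
        forall v, psi (gR v) = delta *: fR (phit v)].
Proof.
case: hD => Dlin Dmul; pose DL := linear_fun Dlin.
exists (coord_a (D (aA V))), (coord_e (D (eA V))),
  (coord_v (D (aA V))), (coord_v' (D (aA V))),
  (coord_v \o DL \o @inV K V), (coord_v \o DL \o @inV' K V),
  (coord_v' \o DL \o @inV K V), (coord_v' \o DL \o @inV' K V) => /=.
split; last split.
- split; [exact: D_eA_cases | exact: D_aA | exact: D_inV | exact: D_inV' |].
  split; [exact: (coord_v_D_aA_kernel Dlin Dmul) |
         exact: (coord_v'_D_aA_kernel Dlin Dmul)].
- have fL_rel := D_inV'_fL Dlin Dmul hdg hgL hgR.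
  have fR_rel := D_inV'_fR Dlin Dmul hdg hgL hgR.
  by split=> v; [exact: (fL_rel v).1 | exact: (fL_rel v).2 |
                 exact: (fR_rel v).1 | exact: (fR_rel v).2].
- have gL_rel := D_inV_gL Dlin Dmul hdg hfL hfR.
  have gR_rel := D_inV_gR Dlin Dmul hdg hfL hfR.
  by split=> v; [exact: (gL_rel v).1 | exact: (gL_rel v).2 |
                 exact: (gR_rel v).1 | exact: (gR_rel v).2].
Qed.
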